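(* Let $d\ge2$, $\lambda\ge1$, let $B$ be a magnetic field with bounded derivatives of all orders and $A$ its transversal gauge potential. Then for all $y,x,\xi\in\mathbb{R}^d$ and $1\le j\le d$, $$-i\partial_{y_j}g^{A,\lambda}_{x,\xi}(y)=i\partial_{x_j}g^{A,\lambda}_{x,\xi}(y)-\sum_{k=1}^dB_{jk}(x)\,i\partial_{\xi_k}g^{A,\lambda}_{x,\xi}(y)+\Big[A_j(y)-A_j(x)-r^{(1)}_x\big(A_j(\cdot,x)\big)(y)+r^{(1)}_x\big(A_j(x,\cdot)\big)(y)\Big]g^{A,\lambda}_{x,\xi}(y).$$
   Context: $B=(B_{jk})$, $B_{jk}\in C^\infty(\mathbb{R}^d,\mathbb{R})$, $B_{jk}=-B_{kj}$, $B$ closed, $\sup|\partial^\alpha B_{jk}|\le C_\alpha$. For $x\in\mathbb{R}^d$, $A_j(y,x):=-\sum_{k=1}^d\int_0^1s(y_k-x_k)B_{jk}(x+s(y-x))\,ds$, and $A_j(y):=A_j(y,0)$. $\varphi^A(y,x):=(y-x)\cdot\int_0^1A((1-s)x+sy)\,ds$. $g(y)=(2\pi)^{-d/2}\pi^{-d/4}e^{-|y|^2/2}$, $g^{A,\lambda}_{x,\xi}(y)=\lambda^{d/2}e^{i\xi\cdot(y-x)}g(\lambda(y-x))e^{i\varphi^A(y,x)}$. For a smooth function $f$ of $y$, $r^{(1)}_x(f)(y):=f(y)-f(x)-\nabla f(x)\cdot(y-x)$ is the remainder of the first-order Taylor expansion at $x$; here it is applied to $y\mapsto A_j(y,x)$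 and $y\mapsto A_j(x,y)$. *)

From Stdlib Require Import Reals List.
From Coquelicot Require Import Coquelicot.
From mathcomp Require Import ssreflect ssrbool eqtype ssrnat seq fintype.
Set Implicit Arguments.
Unset Strict Implicit.
Local Open Scope R_scope.

Definition vec (d : nat) := 'I_d -> R.

Definition sumI {d : nat} (f : 'I_d -> R) : R :=
  fold_right Rplus 0 (map f (enum 'I_d)).

Definition upd {d : nat} (x : vec d) (j : 'I_d) (t : R) : vec d :=
  fun i => if i == j then x i + t else x i.

Definition partial {d : nat} (f : vec d -> R) (j : 'I_d) (x : vec d) : R :=
  Derive (fun t => f (upd x j t)) 0.

Definition has_partial {d : nat} (f : vec d -> R) (j : 'I_d) (x : vec d) : Prop :=
  ex_derive (fun t => f (upd x j t)) 0.

Fixpoint iter_partial {d : nat} (l : list 'I_d) (f : vec d -> R) : vec d -> R :=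
  match l with
  | nil => f
  | j :: l' => partial (iter_partial l' f) j
  end.

(* C^infinity with all derivatives bounded: every iterated partial derivative
   exists everywhere and is bounded (bounded partials of order k+1 make the
   order-k partials Lipschitz, hence continuous, so this is exactly
   "smooth with sup |d^alpha f| <= C_alpha"). *)
Definition smooth_bdd {d : nat} (f : vec d -> R) : Prop :=
  forall l : list 'I_d,
    (forall (j : 'I_d) (x : vec d), has_partial (iter_partial l f) j x) /\
    (exists C : R, forall x : vec d, Rabs (iter_partial l f x) <= C).

Definition magnetic_field {d : nat} (B : 'I_d -> 'I_d -> vec d -> R) : Prop :=
  (forall j k, smooth_bdd (B j k)) /\
  (forall j k x, B j k x = - B k j x) /\
  (forall i j k x, partial (B j k) i x + partial (B k i) j x + partial (B i j) k x = 0).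

Definition Agauge {d : nat} (B : 'I_d -> 'I_d -> vec d -> R) (j : 'I_d)
  (y x : vec d) : R :=
  - sumI (fun k => RInt (fun s => s * (y k - x k) * B j k (fun i => x i + s * (y i - x i))) 0 1).

Definition zerov {d : nat} : vec d := fun _ => 0.

Definition A0 {d : nat} (B : 'I_d -> 'I_d -> vec d -> R) (j : 'I_d) (y : vec d) : R :=
  Agauge B j y zerov.

Definition phiA {d : nat} (B : 'I_d -> 'I_d -> vec d -> R) (y x : vec d) : R :=
  sumI (fun j => (y j - x j) * RInt (fun s => A0 B j (fun i => (1 - s) * x i + s * y i)) 0 1).

Definition dotv {d : nat} (u v : vec d) : R := sumI (fun i => u i * v i).

Definition gauss (d : nat) (y : vec d) : R :=
  Rpower (2 * PI) (- (INR d / 2)) * Rpower PI (- (INR d / 4)) * exp (- dotv y y / 2).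

Definition cexpi (th : R) : C := (cos th, sin th).

Definition gA {d : nat} (B : 'I_d -> 'I_d -> vec d -> R) (lam : R) (x xi y : vec d) : C :=
  Cmult (RtoC (Rpower lam (INR d / 2) * gauss (fun i => lam * (y i - x i))))
        (Cmult (cexpi (dotv xi (fun i => y i - x i))) (cexpi (phiA B y x))).

Definition Cpartial {d : nat} (F : vec d -> C) (j : 'I_d) (x : vec d) : C :=
  (partial (fun z => Re (F z)) j x, partial (fun z => Im (F z)) j x).

Definition has_Cpartial {d : nat} (F : vec d -> C) (j : 'I_d) (x : vec d) : Prop :=
  has_partial (fun z => Re (F z)) j x /\ has_partial (fun z => Im (F z)) j x.

Definition Csum {d : nat} (f : 'I_d -> C) : C :=
  fold_right Cplus (RtoC 0) (map f (enum 'I_d)).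


Definition taylor_rem1 {d : nat} (f : vec d -> R) (x y : vec d) : R :=
  f y - f x - sumI (fun i => partial f i x * (y i - x i)).

(* Write g^{A,lambda}_{x,xi}(y) = a e^{i theta} with the real amplitude
   a = lambda^{d/2} g(lambda (y - x)) and the phase theta = xi.(y - x) + phi^A(y, x).
   The amplitude depends on y - x only, so its y_j- and x_j-derivatives cancel, and
   i d_{xi_k} g = -(y_k - x_k) g.  The identity thus reduces to
     (d_{y_j} + d_{x_j}) phi^A(y, x) = A_j(y) - A_j(x) + A_j(x, y) - A_j(y, x),
   because the first-order Taylor terms of A_j(., x) and A_j(x, .) at x are
   -+ (1/2) sum_k B_jk(x) (y_k - x_k).  Differentiating under the integral, the left side is
   sum_k (y_k - x_k) int_0^1 d_j A_k(x + s (y - x)) ds.  In the transversal gauge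
   d_j A_k - d_k A_j = B_jk: this follows from the closedness of B and Euler's identity
   2 int_0^1 s b(s z) ds + sum_l z_l int_0^1 s^2 d_l b(s z) ds = b(z).  Hence the integrand is
   d/ds A_j(x + s (y - x)) + sum_k (y_k - x_k) B_jk(x + s (y - x)), whose integral is
   A_j(y) - A_j(x) + A_j(x, y) - A_j(y, x).  All potentials are expressed through the radial
   moments int_0^1 s^n b(x + s z) ds of functions b with bounded derivatives, which are
   Lipschitz in z and differentiable along lines. *)

From HB Require Import structures.
From Stdlib Require Import Reals List Lra FunctionalExtensionality.
From Coquelicot Require Import Coquelicot.
From mathcomp Require Import ssreflect ssrbool ssrfun eqtype ssrnat seq fintype bigop.

Set Implicit Arguments.
Unset Strict Implicit.

Local Open Scope R_scope.

HB.instance Definition _ :=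
  Monoid.isComLaw.Build R 0 Rplus (fun a b c => esym (Rplus_assoc a b c)) Rplus_comm Rplus_0_l.
HB.instance Definition _ := Monoid.isMulLaw.Build R 0 Rmult Rmult_0_l Rmult_0_r.
HB.instance Definition _ :=
  Monoid.isAddLaw.Build R Rmult Rplus Rmult_plus_distr_r Rmult_plus_distr_l.

Section FiniteSums.
Context {d : nat}.
Implicit Types (f g : 'I_d -> R).

Lemma sumIE f : sumI f = \big[Rplus/0]_(i <- enum 'I_d) f i.
Proof. rewrite /sumI unlock /reducebig; by elim: (enum _) => //= i r ->. Qed.

Lemma sumI_ext f g : (forall i, f i = g i) -> sumI f = sumI g.
Proof. by move=> fg; rewrite !sumIE; apply: eq_bigr. Qed.

Lemma sumI_plus f g : sumI (fun i => f i + g i) = sumI f + sumI g.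
Proof. by rewrite !sumIE big_split. Qed.

Lemma sumI_scal c f : sumI (fun i => c * f i) = c * sumI f.
Proof. by rewrite !sumIE big_distrr. Qed.

Lemma sumI_opp f : sumI (fun i => - f i) = - sumI f.
Proof. by rewrite (sumI_ext (g := fun i => -1 * f i)) ?sumI_scal => *; ring. Qed.

Lemma sumI_minus f g : sumI (fun i => f i - g i) = sumI f - sumI g.
Proof. by rewrite /Rminus -sumI_opp -sumI_plus. Qed.

Lemma sumI_swap (f : 'I_d -> 'I_d -> R) :
  sumI (fun i => sumI (fun k => f i k)) = sumI (fun k => sumI (fun i => f i k)).
Proof.
rewrite !sumIE; under eq_bigr do rewrite sumIE.
by rewrite exchange_big; under [RHS]eq_bigr do rewrite sumIE.
Qed.

Lemma sumI_delta f j : sumI (fun i => f i * (if i == j then 1 else 0)) = f j.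
Proof.
rewrite sumIE (bigD1_seq j) ?mem_enum ?enum_uniq //= eqxx big1_seq; first ring.
by move=> i /andP [/negbTE -> _]; ring.
Qed.

Lemma sumI_le f g : (forall i, f i <= g i) -> sumI f <= sumI g.
Proof.
move=> fg; rewrite !sumIE; elim/big_ind2: _ => // [|a b a' b']; [lra | exact: Rplus_le_compat].
Qed.

Lemma sumI_ge_term f k : (forall i, 0 <= f i) -> f k <= sumI f.
Proof.
move=> f_ge0; rewrite sumIE (bigD1_seq k) ?mem_enum ?enum_uniq //=.
rewrite -{1}(Rplus_0_r (f k)); apply: Rplus_le_compat_l.
by elim/big_ind: _ => // [|a b]; lra.
Qed.

Lemma is_derive_sumI (F : 'I_d -> R -> R) (F' : 'I_d -> R) t :
  (forall i, is_derive (F i) t (F' i)) -> is_derive (fun t => sumI (fun i => F i t)) t (sumI F').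
Proof.
move=> dF; rewrite /sumI; elim: (enum 'I_d) => [|i r IH] /=.
  exact: is_derive_const.
exact: (is_derive_plus (F i)).
Qed.

Lemma continuity_2d_pt_sumI (F : 'I_d -> R -> R -> R) u v :
  (forall i, continuity_2d_pt (F i) u v) ->
  continuity_2d_pt (fun a b => sumI (fun i => F i a b)) u v.
Proof.
move=> cF; rewrite /sumI; elim: (enum 'I_d) => [|i r IH] /=.
  exact: continuity_2d_pt_const.
exact: continuity_2d_pt_plus.
Qed.

Lemma RInt_sumI (F : 'I_d -> R -> R) a b :
  (forall i, ex_RInt (F i) a b) ->
  ex_RInt (fun s => sumI (fun i => F i s)) a b /\
  RInt (fun s => sumI (fun i => F i s)) a b = sumI (fun i => RInt (F i) a b).
Proof.
move=> iF; rewrite /sumI; elim: (enum 'I_d) => [|i r [exr Er]] /=.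
  by split; [apply: ex_RInt_const | rewrite RInt_const /scal /= /mult /=; ring].
by split; [exact: (ex_RInt_plus (F i)) | rewrite (RInt_plus (F i)) // Er].
Qed.

End FiniteSums.

Lemma mean_value_bound (F F' : R -> R) a b M :
  (forall t, is_derive F t (F' t)) ->
  (forall t, Rmin a b <= t <= Rmax a b -> Rabs (F' t) <= M) ->
  Rabs (F b - F a) <= M * Rabs (b - a).
Proof.
move=> dF F'_le.
have contF t : continuity_pt F t.
  by apply/continuity_pt_filterlim/ex_derive_continuous; exists (F' t).
have [c [c_ab ->]] := MVT_gen F a b F' (fun t _ => dF t) (fun t _ => contF t).
by rewrite Rabs_mult; apply: Rmult_le_compat_r; [apply: Rabs_pos | apply: F'_le].
Qed.

Lemma is_derive_of_quadratic_bound (F : R -> R) x l M :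
  (forall h, Rabs h <= 1 -> Rabs (F (x + h) - F x - l * h) <= M * h ^ 2) ->
  is_derive F x l.
Proof.
move=> quad; apply/is_derive_Reals => eps eps_gt0.
pose M' := Rabs M + 1; have M'_gt0 : 0 < M' by have := Rabs_pos M; rewrite /M'; lra.
have delta_gt0 : 0 < Rmin 1 (eps / M') by apply: Rmin_pos; [lra | apply: Rdiv_lt_0_compat].
exists (mkposreal _ delta_gt0) => h h_neq0 /= h_lt.
have h_le1 : Rabs h <= 1 by apply: Rle_trans (Rlt_le _ _ h_lt) (Rmin_l _ _).
have h_small : M' * Rabs h < eps.
  have /(Rmult_lt_compat_l M' _ _ M'_gt0) := Rlt_le_trans _ _ _ h_lt (Rmin_r _ _).
  by rewrite /Rdiv -Rmult_assoc (Rmult_comm M' eps) Rmult_assoc Rinv_r ?Rmult_1_r //; lra.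
have habs_gt0 : 0 < Rabs h by apply: Rabs_pos_lt.
have quad_h : M * h ^ 2 <= M' * Rabs h * Rabs h.
  have hh : Rabs h * Rabs h = h ^ 2 by rewrite -pow2_abs /= Rmult_1_r.
  rewrite Rmult_assoc hh; have := Rle_abs M; have := pow2_ge_0 h; rewrite /M'; nra.
replace ((F (x + h) - F x) / h - l) with ((F (x + h) - F x - l * h) / h) by (field; auto).
rewrite Rabs_div //; apply: (Rmult_lt_reg_r (Rabs h)) => //.
rewrite /Rdiv Rmult_assoc Rinv_l ?Rmult_1_r; last lra.
have := quad h h_le1; nra.
Qed.

Lemma is_derive_Rmult (f g : R -> R) x df dg : is_derive f x df -> is_derive g x dg ->
  is_derive (fun t => f t * g t) x (df * g x + f x * dg).
Proof. by move=> df_ dg_; have := is_derive_mult f g x df dg df_ dg_ Rmult_comm. Qed.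

Lemma is_derive_eq (f : R -> R) (x l l' : R) : is_derive f x l -> l = l' -> is_derive f x l'.
Proof. by move=> + <-. Qed.

Lemma eq_RInt (f g : R -> R) a b : (forall s, f s = g s) -> RInt f a b = RInt g a b.
Proof. by move=> fg; apply: RInt_ext => s _; apply: fg. Qed.

Lemma RInt_mult_l (f : R -> R) c a b :
  ex_RInt f a b -> RInt (fun s => c * f s) a b = c * RInt f a b.
Proof. exact: RInt_scal. Qed.

Lemma RInt_Rminus (f g : R -> R) a b : ex_RInt f a b -> ex_RInt g a b ->
  RInt (fun s => f s - g s) a b = RInt f a b - RInt g a b.
Proof. exact: RInt_minus. Qed.

Lemma RInt_reflect01 (f : R -> R) : ex_RInt f 0 1 -> RInt (fun s => f (1 - s)) 0 1 = RInt f 0 1.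
Proof.
move=> ex_f; have ex_f' : ex_RInt f (-1 * 0 + 1) (-1 * 1 + 1).
  have -> : -1 * 0 + 1 = 1 by ring.
  have -> : -1 * 1 + 1 = 0 by ring.
  exact: ex_RInt_swap.
have := RInt_comp_lin f (-1) 1 0 1 ex_f'.
rewrite (RInt_scal (V := R_CompleteNormedModule)); last first.
  apply: ex_RInt_ext (ex_RInt_scal _ _ _ (-1) (ex_RInt_comp_lin _ _ _ _ _ ex_f')) => s _.
  by rewrite /scal /= /mult /=; ring.
have -> : -1 * 0 + 1 = 1 by ring.
have -> : -1 * 1 + 1 = 0 by ring.
rewrite -(opp_RInt_swap _ _ _ ex_f) /scal /= /mult /opp /= => E.
have -> : RInt (fun s => f (1 - s)) 0 1 = RInt (fun s => f (-1 * s + 1)) 0 1.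
  by apply: eq_RInt => s; congr f; ring.
lra.
Qed.

Lemma continuity_2d_pt_continuous (g : R -> R -> R) x y :
  continuity_2d_pt g x y -> continuous (g x) y.
Proof.
move=> cg; apply/filterlim_locally => eps; have [delta near] := cg eps.
exists delta => z z_near; apply: near => //.
by rewrite Rminus_diag Rabs_R0; apply: cond_pos.
Qed.

Lemma continuity_2d_pt_pow n u v : continuity_2d_pt (fun _ s => s ^ n) u v.
Proof.
elim: n => [|n IH] /=; first exact: continuity_2d_pt_const.
by apply: continuity_2d_pt_mult => //; apply: continuity_2d_pt_id2.
Qed.

Lemma ex_RInt_of_continuity_2d (g : R -> R) a b :
  (forall s, continuity_2d_pt (fun _ s => g s) 0 s) -> ex_RInt g a b.
Proof.
move=> cg; apply: (@ex_RInt_continuous R_CompleteNormedModule) => s _.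
exact: (@continuity_2d_pt_continuous (fun _ s => g s) 0).
Qed.

Lemma is_derive_RInt_param01 (F F' : R -> R -> R) t0 :
  (forall t s, is_derive (fun u => F u s) t (F' t s)) ->
  (forall t s, continuity_2d_pt F t s) -> (forall t s, continuity_2d_pt F' t s) ->
  is_derive (fun t => RInt (F t) 0 1) t0 (RInt (F' t0) 0 1).
Proof.
move=> dF cF cF'.
rewrite (RInt_ext (F' t0) (fun s => Derive (fun u => F u s) t0)) => [|s _]; last first.
  by rewrite (is_derive_unique _ _ _ (dF t0 s)).
apply: is_derive_RInt_param.
- by apply: filter_forall => t s _; exists (F' t s).
- move=> s _; apply: continuity_2d_pt_ext (cF' t0 s) => u w.
  by rewrite (is_derive_unique _ _ _ (dF u w)).
- apply: filter_forall => t; apply: (@ex_RInt_continuous R_CompleteNormedModule) => s _.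
  exact: continuity_2d_pt_continuous.
Qed.

Section Vectors.
Context {d : nat}.
Implicit Types (x z a b : vec d).

Definition ev (j : 'I_d) : vec d := fun i => if i == j then 1 else 0.

Definition is_line (P : R -> vec d) (p v : vec d) : Prop := forall t i, P t i = p i + t * v i.

Definition dist1 a b : R := sumI (fun k => Rabs (a k - b k)).

Definition segment x y (s : R) : vec d := fun i => (1 - s) * x i + s * y i.

Lemma is_line_eq P p v : is_line P p v -> P = (fun t i => p i + t * v i).
Proof. by move=> lP; do 2 apply: functional_extensionality => ?; apply: lP. Qed.

Lemma is_line_is_derive_coord (Z : R -> vec d) z v k t0 :
  is_line Z z v -> is_derive (fun t => Z t k) t0 (v k).
Proof. by move=> /is_line_eq ->; auto_derive => //; ring. Qed.

Lemma is_line_upd x j : is_line (upd x j) x (ev j).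
Proof. by move=> t i; rewrite /upd /ev; case: (i == j); ring. Qed.

Lemma upd0 x j : upd x j 0 = x.
Proof. by apply: functional_extensionality => i; rewrite is_line_upd; ring. Qed.

Lemma dist1_ge0 a b : 0 <= dist1 a b.
Proof.
by rewrite /dist1 sumIE; elim/big_ind: _ => [||i _]; [lra | move=> *; lra | apply: Rabs_pos].
Qed.

Lemma dist1_ge_coord a b k : Rabs (a k - b k) <= dist1 a b.
Proof. by apply: (@sumI_ge_term _ (fun k => Rabs (a k - b k))) => i; apply: Rabs_pos. Qed.

Lemma dist1_upd z i t : dist1 (upd z i t) z = Rabs t.
Proof.
rewrite /dist1 -(sumI_delta (fun _ => Rabs t) i); apply: sumI_ext => k.
rewrite is_line_upd /ev; case: (k == i).
  by rewrite Rmult_1_r (_ : z k + t - z k = t) //; ring.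
by rewrite Rmult_0_r (_ : z k + 0 - z k = 0) ?Rabs_R0; ring.
Qed.

Lemma dist1_diag a : dist1 a a = 0.
Proof. by rewrite /dist1 sumIE big1 // => k _; rewrite Rminus_diag Rabs_R0. Qed.

End Vectors.

Section SmoothBounded.
Context {d : nat}.
Implicit Types (f : vec d -> R) (x z a b : vec d).

Definition mix (l : seq 'I_d) a b : vec d := fun k => if k \in l then a k else b k.

Lemma mix_nil a b : mix [::] a b = b.
Proof. by apply: functional_extensionality => k; rewrite /mix in_nil. Qed.

Lemma mix_enum a b : mix (enum 'I_d) a b = a.
Proof. by apply: functional_extensionality => k; rewrite /mix mem_enum. Qed.

Lemma mix_cons i l a b : i \notin l -> mix (i :: l) a b = upd (mix l a b) i (a i - b i).
Proof.
move=> i_l; apply: functional_extensionality => k; rewrite /mix /upd in_cons.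
by case: (eqVneq k i) => [->|] //=; rewrite (negbTE i_l); ring.
Qed.

Lemma dist1_mix l a b : dist1 (mix l a b) b <= dist1 a b.
Proof.
apply: sumI_le => k; rewrite /mix; case: (k \in l); first exact: Rle_refl.
by rewrite Rminus_diag Rabs_R0; apply: Rabs_pos.
Qed.

(* Both estimates below go from b to a one coordinate at a time, through [mix l a b]. *)
Lemma lipschitz_of_coordinate_bound (f : vec d -> R) C :
  (forall z i t, Rabs (f (upd z i t) - f z) <= C * Rabs t) ->
  forall a b, Rabs (f a - f b) <= C * dist1 a b.
Proof.
move=> step a b.
suff : forall l, uniq l ->
    Rabs (f (mix l a b) - f b) <= C * \big[Rplus/0]_(k <- l) Rabs (a k - b k).
  by move/(_ _ (enum_uniq 'I_d)); rewrite mix_enum /dist1 sumIE.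
elim=> [_|i l IH] /=.
  by rewrite mix_nil big_nil Rminus_diag Rabs_R0 Rmult_0_r; apply: Rle_refl.
case/andP=> i_l /IH {}IH; rewrite mix_cons // big_cons Rmult_plus_distr_l.
set z := mix l a b in IH *; have := step z i (a i - b i).
rewrite (_ : f (upd z i (a i - b i)) - f b = f (upd z i (a i - b i)) - f z + (f z - f b));
  last ring.
(* [set] identifies the two elaborations of the partial sum, so that [lra] sees one atom. *)
set S := \big[Rplus/0]_(k <- l) _ in IH *.
by have := Rabs_triang (f (upd z i (a i - b i)) - f z) (f z - f b); lra.
Qed.

Lemma taylor2_of_coordinate_bound (f : vec d -> R) C : 0 <= C ->
  (forall i a b, Rabs (partial f i a - partial f i b) <= C * dist1 a b) ->
  (forall z i t, Rabs (f (upd z i t) - f z - partial f i z * t) <= C * t ^ 2) ->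
  forall a b, Rabs (f a - f b - sumI (fun k => partial f k b * (a k - b k)))
              <= 2 * C * dist1 a b ^ 2.
Proof.
move=> C_ge0 lip_df step a b; set N := dist1 a b.
suff : forall l, uniq l ->
    Rabs (f (mix l a b) - f b - \big[Rplus/0]_(k <- l) (partial f k b * (a k - b k)))
    <= 2 * C * \big[Rplus/0]_(k <- l) Rabs (a k - b k) * N.
  by move/(_ _ (enum_uniq 'I_d)); rewrite mix_enum -!sumIE /= Rmult_1_r Rmult_assoc.
elim=> [_|i l IH] /=.
  by rewrite mix_nil !big_nil !Rminus_diag Rabs_R0; nra.
case/andP=> i_l /IH {}IH; rewrite mix_cons // !big_cons.
set z := mix l a b in IH *; set t := a i - b i.
have t_le : Rabs t <= N by apply: dist1_ge_coord.
have z_le : dist1 z b <= N by apply: dist1_mix.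
have step_le : C * t ^ 2 <= C * Rabs t * N.
  rewrite Rmult_assoc; apply: Rmult_le_compat_l => //.
  by rewrite -pow2_abs /= Rmult_1_r; apply: Rmult_le_compat_l => //; apply: Rabs_pos.
have lip_le : Rabs ((partial f i z - partial f i b) * t) <= C * N * Rabs t.
  rewrite Rabs_mult; apply: Rmult_le_compat_r; first exact: Rabs_pos.
  by apply: Rle_trans (lip_df i z b) _; apply: Rmult_le_compat_l.
have := step z i t; have := Rabs_pos t.
set S := \big[Rplus/0]_(k <- l) (_ * _) in IH *.
set T := \big[Rplus/0]_(k <- l) Rabs _ in IH *.
rewrite (_ : f (upd z i t) - f b - (partial f i b * t + S) =
  (f (upd z i t) - f z - partial f i z * t) + (partial f i z - partial f i b) * t
  + (f z - f b - S)); last ring.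
move: (Rabs_triang (f (upd z i t) - f z - partial f i z * t + (partial f i z - partial f i b) * t)
  (f z - f b - S)) (Rabs_triang (f (upd z i t) - f z - partial f i z * t)
  ((partial f i z - partial f i b) * t)).
lra.
Qed.

Lemma upd_upd x i s t : upd (upd x i s) i t = upd x i (s + t).
Proof. by apply: functional_extensionality => k; rewrite !is_line_upd; ring. Qed.

Lemma is_derive_upd f i x t0 : has_partial f i (upd x i t0) ->
  is_derive (fun t => f (upd x i t)) t0 (partial f i (upd x i t0)).
Proof.
move=> /Derive_correct; rewrite -/(partial f i _); set l := partial f i _ => dF.
have dF' : is_derive (fun h => f (upd x i (t0 + h))) (t0 - t0) l.
  by rewrite Rminus_diag; apply: is_derive_ext dF => h; rewrite upd_upd.
have dshift : is_derive (fun t => t - t0) t0 1 by auto_derive; [|ring].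
have := is_derive_comp (fun h => f (upd x i (t0 + h))) (fun t => t - t0) t0 l 1 dF' dshift.
rewrite /scal /= /mult /= Rmult_1_l; apply: is_derive_ext => t.
by congr (f (upd x i _)); ring.
Qed.

Lemma smooth_bdd_partial f i : smooth_bdd f -> smooth_bdd (partial f i).
Proof.
move=> sf l; have -> : iter_partial l (partial f i) = iter_partial (l ++ [:: i]) f.
  by elim: l => //= j l ->.
exact: sf.
Qed.

Lemma smooth_bdd_has_partial f : smooth_bdd f -> forall i z, has_partial f i z.
Proof. by move=> sf; case: (sf nil). Qed.

Lemma finite_bound (P : 'I_d -> R -> Prop) :
  (forall i C C', P i C -> C <= C' -> P i C') -> (forall i, exists C, P i C) ->
  exists C, 0 <= C /\ forall i, P i C.
Proof.
move=> P_mono P_ex.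
suff [C [C_ge0 PC]] : exists C, 0 <= C /\ forall i, i \in enum 'I_d -> P i C.
  by exists C; split => // i; apply: PC; rewrite mem_enum.
elim: (enum 'I_d) => [|i l [C [C_ge0 PC]]]; first by exists 0; split => //; lra.
have [Ci PCi] := P_ex i; exists (Rmax C Ci); split.
  exact: Rle_trans C_ge0 (Rmax_l _ _).
move=> k; rewrite in_cons => /orP [/eqP ->|k_l].
  exact: P_mono PCi (Rmax_r _ _).
exact: P_mono (PC _ k_l) (Rmax_l _ _).
Qed.

Lemma smooth_bdd_partials_bounded f :
  smooth_bdd f -> exists C, 0 <= C /\ forall i z, Rabs (partial f i z) <= C.
Proof.
move=> sf; apply: finite_bound => [i C C' PC le_CC' z|i].
  exact: Rle_trans (PC z) le_CC'.
by case: (smooth_bdd_partial i sf nil) => _ [C bC]; exists C.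
Qed.

Lemma lipschitz_of_bounded_partials f C :
  (forall i z, has_partial f i z) -> (forall i z, Rabs (partial f i z) <= C) ->
  forall a b, Rabs (f a - f b) <= C * dist1 a b.
Proof.
move=> df df_le; apply: lipschitz_of_coordinate_bound => z i t.
have := @mean_value_bound (fun s => f (upd z i s)) (fun s => partial f i (upd z i s)) 0 t C.
rewrite upd0 Rminus_0_r; apply=> [s|s _]; [exact: is_derive_upd | exact: df_le].
Qed.

Lemma smooth_bdd_lipschitz f :
  smooth_bdd f -> exists C, forall a b, Rabs (f a - f b) <= C * dist1 a b.
Proof.
move=> sf; have [C [_ df_le]] := smooth_bdd_partials_bounded sf.
by exists C; apply: lipschitz_of_bounded_partials => //; apply: smooth_bdd_has_partial.
Qed.

Lemma smooth_bdd_taylor2 f : smooth_bdd f -> exists K, forall a b,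
  Rabs (f a - f b - sumI (fun k => partial f k b * (a k - b k))) <= K * dist1 a b ^ 2.
Proof.
move=> sf.
have [C [C_ge0 d2f_le]] : exists C, 0 <= C /\ forall i m z, Rabs (partial (partial f i) m z) <= C.
  apply: finite_bound => [i C C' PC le_CC' m z|i].
    exact: Rle_trans (PC m z) le_CC'.
  by have [C [_ ?]] := smooth_bdd_partials_bounded (smooth_bdd_partial i sf); exists C.
have lip_df i : forall a b, Rabs (partial f i a - partial f i b) <= C * dist1 a b.
  apply: lipschitz_of_bounded_partials (d2f_le i).
  exact/smooth_bdd_has_partial/smooth_bdd_partial.
exists (2 * C); apply: taylor2_of_coordinate_bound => // z i t.
have := @mean_value_bound (fun s => f (upd z i s) - s * partial f i z)
  (fun s => partial f i (upd z i s) - partial f i z) 0 t (C * Rabs t).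
rewrite upd0 Rmult_0_l !Rminus_0_r.
have -> : f (upd z i t) - t * partial f i z - f z = f (upd z i t) - f z - partial f i z * t.
  by ring.
have -> : C * Rabs t * Rabs t = C * t ^ 2 by rewrite -pow2_abs /=; ring.
apply=> [s|s s_between].
  apply: is_derive_minus.
    exact/is_derive_upd/smooth_bdd_has_partial.
  by rewrite -{2}(Rmult_1_l (partial f i z)); apply: is_derive_scal_l; apply: is_derive_id.
apply: Rle_trans (lip_df i _ _) _; rewrite dist1_upd.
apply: Rmult_le_compat_l => //.
by move: s_between; rewrite /Rmin /Rmax; case: Rle_dec => ? ?; split_Rabs; lra.
Qed.

Lemma smooth_bdd_is_derive_line f P p v t0 : smooth_bdd f -> is_line P p v ->
  is_derive (fun t => f (P t)) t0 (sumI (fun m => partial f m (P t0) * v m)).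
Proof.
move=> sf lP; have [K taylor] := smooth_bdd_taylor2 sf.
set V := sumI (fun k => Rabs (v k)).
apply: (@is_derive_of_quadratic_bound _ _ _ (K * V ^ 2)) => h _.
have := taylor (P (t0 + h)) (P t0).
rewrite (_ : sumI _ = sumI (fun m => partial f m (P t0) * v m) * h); last first.
  by rewrite Rmult_comm -sumI_scal; apply: sumI_ext => k; rewrite !lP; ring.
rewrite (_ : dist1 _ _ = Rabs h * V); last first.
  by rewrite /dist1 /V -sumI_scal; apply: sumI_ext => k; rewrite !lP -Rabs_mult; congr Rabs; ring.
by rewrite Rpow_mult_distr pow2_abs (Rmult_comm (h ^ 2)) Rmult_assoc.
Qed.

End SmoothBounded.

Section VecContinuity.
Context {d : nat}.
Implicit Types (f : vec d -> R).

(* Coquelicot puts no topology on [vec d]; continuity of [f : vec d -> R] is stated along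
   jointly continuous two-parameter families, the form needed for parametric integrals. *)
Definition vec_continuous f : Prop :=
  forall (X : R -> R -> vec d) u v, (forall i, continuity_2d_pt (fun a b => X a b i) u v) ->
  continuity_2d_pt (fun a b => f (X a b)) u v.

Lemma continuity_2d_pt_vec f (X : R -> R -> vec d) u v : vec_continuous f ->
  (forall i, continuity_2d_pt (fun a b => X a b i) u v) ->
  continuity_2d_pt (fun a b => f (X a b)) u v.
Proof. exact. Qed.

Lemma lipschitz_vec_continuous f C :
  (forall a b, Rabs (f a - f b) <= C * dist1 a b) -> vec_continuous f.
Proof.
move=> lip X u v cX eps; pose C' := Rabs C + 1.
have C'_gt0 : 0 < C' by have := Rabs_pos C; rewrite /C'; lra.
have cdist : continuity_2d_pt (fun a b => dist1 (X a b) (X u v)) u v.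
  apply: continuity_2d_pt_sumI => k; apply: continuity_1d_2d_pt_comp.
    exact: Rcontinuity_abs.
  by apply: continuity_2d_pt_minus => //; apply: continuity_2d_pt_const.
have [delta near] := cdist (mkposreal _ (Rdiv_lt_0_compat _ _ (cond_pos eps) C'_gt0)).
exists delta => a b ua vb; have := near a b ua vb.
rewrite /= dist1_diag Rminus_0_r Rabs_right; last by apply: Rle_ge; apply: dist1_ge0.
move=> dist_lt; apply: Rle_lt_trans (lip _ _) _.
have := dist1_ge0 (X a b) (X u v); have := Rle_abs C.
have : C' * dist1 (X a b) (X u v) < eps.
  apply: (Rlt_le_trans _ (C' * (eps / C'))); first exact: Rmult_lt_compat_l.
  by right; field; lra.
rewrite /C'; nra.
Qed.

Lemma smooth_bdd_vec_continuous f : smooth_bdd f -> vec_continuous f.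
Proof. by case/smooth_bdd_lipschitz => C; apply: lipschitz_vec_continuous. Qed.

End VecContinuity.

Ltac continuity_2d_with vec_cont :=
  repeat first
    [ apply: continuity_2d_pt_vec; [by vec_cont | move=> ?]
    | apply: continuity_2d_pt_plus | apply: continuity_2d_pt_minus
    | apply: continuity_2d_pt_mult | apply: continuity_2d_pt_opp
    | apply: continuity_2d_pt_id1 | apply: continuity_2d_pt_id2
    | apply: continuity_2d_pt_const | apply: continuity_2d_pt_pow
    | apply: continuity_2d_pt_sumI => ?
    | match goal with cX : forall i, continuity_2d_pt _ _ _ |- _ => apply: cX end ].

Section Moments.
Context {d : nat}.
Implicit Types (b : vec d -> R) (x z : vec d).

Definition moment (n : nat) b x z : R :=
  RInt (fun s => s ^ n * b (fun i => x i + s * z i)) 0 1.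

Lemma ex_RInt_moment n b x z : vec_continuous b ->
  ex_RInt (fun s => s ^ n * b (fun i => x i + s * z i)) 0 1.
Proof.
by move=> cb; apply: ex_RInt_of_continuity_2d => s; continuity_2d_with ltac:(exact: cb).
Qed.

Lemma moment_lipschitz n b x C : (forall a a', Rabs (b a - b a') <= C * dist1 a a') ->
  forall z z', Rabs (moment n b x z - moment n b x z') <= Rabs C * dist1 z z'.
Proof.
move=> lip z z'; have cb := lipschitz_vec_continuous lip.
have ex_z := ex_RInt_moment n x z cb; have ex_z' := ex_RInt_moment n x z' cb.
rewrite /moment -RInt_Rminus //.
have ex_diff := ex_RInt_minus _ _ _ _ ex_z ex_z'.
apply: Rle_trans (abs_RInt_le_const _ 0 1 (Rabs C * dist1 z z') Rle_0_1 ex_diff _) _; last first.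
  by rewrite Rminus_0_r Rmult_1_l; apply: Rle_refl.
move=> s s01; rewrite /minus /plus /opp /= -/(Rminus _ _) -Rmult_minus_distr_l Rabs_mult.
have s_pow : Rabs (s ^ n) <= 1.
  rewrite Rabs_right; last by apply/Rle_ge/pow_le; lra.
  by rewrite -(pow1 n); apply: pow_incr; lra.
have dist_scaled : dist1 (fun i => x i + s * z i) (fun i => x i + s * z' i) <= dist1 z z'.
  apply: sumI_le => k; rewrite (_ : x k + s * z k - (x k + s * z' k) = s * (z k - z' k)); last ring.
  by rewrite Rabs_mult Rabs_right; [have := Rabs_pos (z k - z' k); nra | lra].
set D := Rabs (b _ - b _).
apply: Rle_trans (_ : _ <= D) _.
  by rewrite -{2}(Rmult_1_l D); apply: Rmult_le_compat_r => //; apply: Rabs_pos.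
apply: Rle_trans (lip _ _) _.
apply: Rle_trans (Rmult_le_compat_r _ _ _ (dist1_ge0 _ _) (Rle_abs C)) _.
exact: Rmult_le_compat_l (Rabs_pos C) dist_scaled.
Qed.

Lemma moment_vec_continuous n b x : smooth_bdd b -> vec_continuous (moment n b x).
Proof.
case/smooth_bdd_lipschitz => C /(moment_lipschitz n x).
exact: lipschitz_vec_continuous.
Qed.

Lemma moment_line n b x Z z v t0 : smooth_bdd b -> is_line Z z v ->
  is_derive (fun t => moment n b x (Z t)) t0
    (sumI (fun m => v m * moment n.+1 (partial b m) x (Z t0))).
Proof.
move=> sb /is_line_eq ->; rewrite /moment /=.
have cb := smooth_bdd_vec_continuous sb.
have cdb m := smooth_bdd_vec_continuous (smooth_bdd_partial m sb).
pose F' t s := sumI (fun m => v m * (s ^ n.+1 * partial b m (fun i => x i + s * (z i + t * v i)))).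
have -> : sumI (fun m => v m * RInt (fun s => s ^ n.+1 *
             partial b m (fun i => x i + s * (z i + t0 * v i))) 0 1) = RInt (F' t0) 0 1.
  have ex_m m : ex_RInt (fun s => v m * (s ^ n.+1 *
                  partial b m (fun i => x i + s * (z i + t0 * v i)))) 0 1.
    by apply: ex_RInt_scal; apply: ex_RInt_moment.
  rewrite (RInt_sumI ex_m).2; apply: sumI_ext => m.
  by rewrite (RInt_scal (V := R_CompleteNormedModule)) //; apply: ex_RInt_moment.
apply: is_derive_RInt_param01 => t s.
- rewrite (_ : F' t s = s ^ n * sumI (fun m => partial b m (fun i => x i + s * (z i + t * v i))
                                               * (s * v m))).
    apply/is_derive_scal/(smooth_bdd_is_derive_line
      (P := fun u i => x i + s * (z i + u * v i)) (p := fun i => x i + s * z i)) => // u i.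
    ring.
  by rewrite -sumI_scal; apply: sumI_ext => m /=; ring.
- by continuity_2d_with ltac:(exact: cb).
- by rewrite /F'; continuity_2d_with ltac:(exact: cdb).
Qed.

Lemma moment_euler n b x z : smooth_bdd b ->
  INR n.+1 * moment n b x z + sumI (fun m => z m * moment n.+1 (partial b m) x z)
  = b (fun i => x i + z i).
Proof.
move=> sb; have cb := smooth_bdd_vec_continuous sb.
have cdb m := smooth_bdd_vec_continuous (smooth_bdd_partial m sb).
pose h s := s ^ n.+1 * b (fun i => x i + s * z i).
pose dh s := INR n.+1 * (s ^ n * b (fun i => x i + s * z i))
             + sumI (fun m => z m * (s ^ n.+1 * partial b m (fun i => x i + s * z i))).
have dh_h s : is_derive h s (dh s).
  have := is_derive_Rmult (is_derive_pow _ n.+1 s 1 (is_derive_id s))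
            (smooth_bdd_is_derive_line (P := fun s i => x i + s * z i) s sb (fun _ _ => erefl)).
  rewrite /dh /= Rmult_1_r; congr is_derive.
  rewrite -sumI_scal; congr Rplus; first ring.
  by apply: sumI_ext => m; ring.
have dh_cont s : continuous dh s.
  apply: (@continuity_2d_pt_continuous (fun _ s => dh s) 0 s).
  by rewrite /dh; continuity_2d_with ltac:(first [exact: cb | exact: cdb]).
have := is_RInt_derive h dh 0 1 (fun s _ => dh_h s) (fun s _ => dh_cont s).
have h01 : minus (h 1) (h 0) = b (fun i => x i + z i).
  rewrite /minus /plus /opp /= /h pow1 (_ : (fun i => x i + 1 * z i) = fun i => x i + z i).
    by rewrite (pow_i _ (Nat.lt_0_succ n)) Rmult_0_l Ropp_0 Rplus_0_r Rmult_1_l.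
  by apply: functional_extensionality => i; ring.
move/is_RInt_unique; rewrite h01.
have ex_m m : ex_RInt (fun s => z m * (s ^ n.+1 * partial b m (fun i => x i + s * z i))) 0 1.
  by apply: ex_RInt_scal; apply: ex_RInt_moment.
move=> <-; rewrite /dh (RInt_plus (V := R_CompleteNormedModule)).
- rewrite (RInt_scal (V := R_CompleteNormedModule)); last exact: ex_RInt_moment.
  rewrite (RInt_sumI ex_m).2; congr Rplus; apply: sumI_ext => m.
  by rewrite (RInt_scal (V := R_CompleteNormedModule)) //; apply: ex_RInt_moment.
- by apply: ex_RInt_scal; apply: ex_RInt_moment.
- exact: (RInt_sumI ex_m).1.
Qed.

Lemma moment_at_origin n b x z : smooth_bdd b -> (forall i, z i = 0) ->
  moment n b x z = b x / INR n.+1.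
Proof.
move=> sb z0; have := moment_euler n x z sb.
rewrite (sumI_ext (g := fun m => 0 * moment n.+1 (partial b m) x z)) => [|m]; last by rewrite z0.
rewrite sumI_scal Rmult_0_l Rplus_0_r (_ : (fun i => x i + z i) = x); last first.
  by apply: functional_extensionality => i; rewrite z0 Rplus_0_r.
by move=> <-; field; apply: not_0_INR.
Qed.

Lemma moment_opp n b b' x z : vec_continuous b -> (forall w, b' w = - b w) ->
  moment n b' x z = - moment n b x z.
Proof.
move=> cb b'E; have := RInt_opp _ 0 1 (ex_RInt_moment n x z cb).
by rewrite /opp /= /moment => <-; apply: RInt_ext => s _; rewrite b'E /opp /= Ropp_mult_distr_r.
Qed.

Lemma moment_minus n b b1 b2 x z : vec_continuous b1 -> vec_continuous b2 ->
  (forall w, b w = b1 w - b2 w) -> moment n b x z = moment n b1 x z - moment n b2 x z.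
Proof.
move=> cb1 cb2 bE; rewrite /moment.
have := RInt_minus _ _ 0 1 (ex_RInt_moment n x z cb1) (ex_RInt_moment n x z cb2).
rewrite /minus /plus /opp /= /Rminus => <-.
by apply: RInt_ext => s _; rewrite bE /minus /plus /opp /= Rmult_plus_distr_l Ropp_mult_distr_r.
Qed.

End Moments.

Section Radial.
Context {d : nat}.
Implicit Types (b : 'I_d -> vec d -> R) (x z v w : vec d).

Definition radial (n : nat) b x z : R := sumI (fun k => z k * moment n (b k) x z).

Definition radial_deriv (n : nat) b x z v : R :=
  sumI (fun k => v k * moment n (b k) x z
                 + z k * sumI (fun m => v m * moment n.+1 (partial (b k) m) x z)).

Lemma radial_line n b x Z z v t0 : (forall k, smooth_bdd (b k)) -> is_line Z z v ->
  is_derive (fun t => radial n b x (Z t)) t0 (radial_deriv n b x (Z t0) v).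
Proof.
move=> sb lZ; apply: is_derive_sumI => k.
exact: is_derive_Rmult (is_line_is_derive_coord k t0 lZ) (moment_line n x t0 (sb k) lZ).
Qed.

Lemma radial_deriv_scal n b x z v w c : (forall i, v i = c * w i) ->
  radial_deriv n b x z v = c * radial_deriv n b x z w.
Proof.
move=> vw; rewrite /radial_deriv -sumI_scal; apply: sumI_ext => k.
rewrite (sumI_ext (g := fun m => c * (w m * moment n.+1 (partial (b k) m) x z))) => [|m].
  by rewrite sumI_scal vw; ring.
by rewrite vw; ring.
Qed.

Lemma radial_origin n b x z : (forall i, z i = 0) -> radial n b x z = 0.
Proof. by move=> z0; rewrite /radial sumIE big1 // => k _; rewrite z0 Rmult_0_l. Qed.

Lemma radial_deriv_origin n b x z i : (forall k, smooth_bdd (b k)) -> (forall k, z k = 0) ->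
  radial_deriv n b x z (ev i) = b i x / INR n.+1.
Proof.
move=> sb z0; rewrite /radial_deriv -(sumI_delta (fun k => b k x / INR n.+1) i).
by apply: sumI_ext => k; rewrite z0 (moment_at_origin n x (sb k) z0) /ev; ring.
Qed.

End Radial.

Section Gauge.
Context {d : nat} (B : 'I_d -> 'I_d -> vec d -> R) (hB : magnetic_field B).
Implicit Types (x y z v w : vec d).

Lemma B_smooth j k : smooth_bdd (B j k). Proof. exact: hB.1. Qed.

Lemma partial_B_smooth j k m : smooth_bdd (partial (B j k) m).
Proof. exact/smooth_bdd_partial/B_smooth. Qed.

Lemma B_antisym j k z : B k j z = - B j k z. Proof. exact: hB.2.1. Qed.

Lemma partial_B_closed j k l z :
  partial (B k l) j z = partial (B j l) k z - partial (B j k) l z.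
Proof.
have := hB.2.2 l j k z; rewrite /partial.
rewrite (Derive_ext (fun t => B l j (upd z k t)) (fun t => - B j l (upd z k t))) => [|t].
  by rewrite Derive_opp; lra.
exact: B_antisym.
Qed.

Ltac vec_continuous_B :=
  first [ apply: moment_vec_continuous | apply: smooth_bdd_vec_continuous ];
  first [ exact: B_smooth | exact: partial_B_smooth ].

Lemma Agauge_radial j y x : Agauge B j y x = - radial 1 (B j) x (fun i => y i - x i).
Proof.
rewrite /Agauge /radial; congr Ropp; apply: sumI_ext => k.
rewrite /moment -RInt_mult_l; last by apply: ex_RInt_moment; vec_continuous_B.
by apply: eq_RInt => s; ring.
Qed.

Lemma A0_radial j z : A0 B j z = - radial 1 (B j) zerov z.
Proof.
rewrite /A0 Agauge_radial // (_ : (fun i => z i - zerov i) = z) //.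
by apply: functional_extensionality => i; rewrite /zerov Rminus_0_r.
Qed.

Lemma A0_vec_continuous j : vec_continuous (A0 B j).
Proof.
move=> X s t cX; apply: (continuity_2d_pt_ext (fun a b => - radial 1 (B j) zerov (X a b))).
  by move=> a b; rewrite A0_radial.
by rewrite /radial; continuity_2d_with vec_continuous_B.
Qed.

Ltac continuity_gauge :=
  continuity_2d_with ltac:(first [ vec_continuous_B | exact: A0_vec_continuous ]).

(* The substitution s -> 1 - s moves the base point of the ray from y to x. *)
Lemma Agauge_swap_radial j x y :
  Agauge B j x y = radial 0 (B j) x (fun i => y i - x i) - radial 1 (B j) x (fun i => y i - x i).
Proof.
rewrite /Agauge /radial -sumI_minus -sumI_opp; apply: sumI_ext => k.
have ex_B n : ex_RInt (fun s => s ^ n * B j k (fun i => x i + s * (y i - x i))) 0 1.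
  by apply: ex_RInt_moment; vec_continuous_B.
rewrite -RInt_reflect01; last by apply: ex_RInt_of_continuity_2d => s; continuity_gauge.
rewrite (eq_RInt (g := fun s => (x k - y k) * (s ^ 0 * B j k (fun i => x i + s * (y i - x i)))
                         - (x k - y k) * (s ^ 1 * B j k (fun i => x i + s * (y i - x i))))).
  rewrite RInt_Rminus; try exact: ex_RInt_scal.
  by rewrite (RInt_mult_l _ (ex_B 0%nat)) (RInt_mult_l _ (ex_B 1%nat)) /moment; ring.
move=> s; rewrite (_ : (fun i => y i + (1 - s) * (x i - y i)) = fun i => x i + s * (y i - x i)).
  by ring.
by apply: functional_extensionality => i; ring.
Qed.

Lemma Agauge_diag j x : Agauge B j x x = 0.
Proof. by rewrite Agauge_radial radial_origin ?Ropp_0 // => i; rewrite Rminus_diag. Qed.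

Lemma Agauge_antisym_diff j x y :
  Agauge B j x y - Agauge B j y x = radial 0 (B j) x (fun i => y i - x i).
Proof. rewrite Agauge_swap_radial Agauge_radial; ring. Qed.

Lemma is_line_upd_minus x i : is_line (fun t k => upd x i t k - x k) zerov (ev i).
Proof. by move=> t k; rewrite is_line_upd /zerov; ring. Qed.

Lemma upd_minus_origin x i k : upd x i 0 k - x k = 0.
Proof. by rewrite upd0 Rminus_diag. Qed.

Lemma partial_Agauge_l j i x : partial (fun z => Agauge B j z x) i x = - (B j i x / 2).
Proof.
rewrite /partial; apply: is_derive_unique.
apply: (is_derive_ext (fun t => - radial 1 (B j) x (fun k => upd x i t k - x k))).
  by move=> t; rewrite Agauge_radial.
apply: is_derive_eq
  (is_derive_opp _ _ _ (radial_line 1 x 0 (B_smooth j) (is_line_upd_minus x i))) _.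
by rewrite (radial_deriv_origin _ _ _ (B_smooth j) (upd_minus_origin x i)) /opp /=; field.
Qed.

Lemma partial_Agauge_r j i x : partial (fun z => Agauge B j x z) i x = B j i x / 2.
Proof.
rewrite /partial; apply: is_derive_unique.
apply: (is_derive_ext (fun t => radial 0 (B j) x (fun k => upd x i t k - x k)
                                 - radial 1 (B j) x (fun k => upd x i t k - x k))).
  by move=> t; rewrite Agauge_swap_radial.
apply: is_derive_eq (is_derive_minus _ _ _ _ _
  (radial_line 0 x 0 (B_smooth j) (is_line_upd_minus x i))
  (radial_line 1 x 0 (B_smooth j) (is_line_upd_minus x i))) _.
rewrite !(radial_deriv_origin _ _ _ (B_smooth j) (upd_minus_origin x i)).
by rewrite /minus /plus /opp /=; field.
Qed.

Definition A0_deriv j z v : R := - radial_deriv 1 (B j) zerov z v.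

Lemma A0_line j P p v t0 : is_line P p v ->
  is_derive (fun t => A0 B j (P t)) t0 (A0_deriv j (P t0) v).
Proof.
move=> lP; apply: (is_derive_ext (fun t => - radial 1 (B j) zerov (P t))) => [t|].
  by rewrite A0_radial.
exact: is_derive_opp (radial_line 1 zerov t0 (B_smooth j) lP).
Qed.

Lemma continuity_2d_pt_A0_deriv j (X V : R -> R -> vec d) s t :
  (forall i, continuity_2d_pt (fun a b => X a b i) s t) ->
  (forall i, continuity_2d_pt (fun a b => V a b i) s t) ->
  continuity_2d_pt (fun a b => A0_deriv j (X a b) (V a b)) s t.
Proof. by move=> cX cV; rewrite /A0_deriv /radial_deriv; continuity_gauge. Qed.

Lemma A0_deriv_scal j z v w c : (forall i, v i = c * w i) ->
  A0_deriv j z v = c * A0_deriv j z w.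
Proof. by move=> vw; rewrite /A0_deriv (radial_deriv_scal _ _ _ _ vw); ring. Qed.

Lemma A0_deriv_ev k z j : A0_deriv k z (ev j) =
  - (moment 1 (B k j) zerov z + sumI (fun l => z l * moment 2 (partial (B k l) j) zerov z)).
Proof.
rewrite /A0_deriv /radial_deriv sumI_plus; congr (- (_ + _)).
  rewrite -(sumI_delta (fun l => moment 1 (B k l) zerov z) j).
  by apply: sumI_ext => l; rewrite /ev; ring.
apply: sumI_ext => l; congr (_ * _).
rewrite -(sumI_delta (fun m => moment 2 (partial (B k l) m) zerov z) j).
by apply: sumI_ext => m; rewrite /ev; ring.
Qed.

(* Antisymmetry and closedness of B reduce the curl identity to Euler's identity for B j k. *)
Lemma A0_deriv_curl j z w :
  sumI (fun k => w k * A0_deriv k z (ev j)) = A0_deriv j z w + sumI (fun k => w k * B j k z).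
Proof.
pose M1 k := moment 1 (B j k) zerov z.
pose P k := sumI (fun l => z l * moment 2 (partial (B j l) k) zerov z).
pose Q k := sumI (fun l => z l * moment 2 (partial (B j k) l) zerov z).
have lhs k : w k * A0_deriv k z (ev j) = w k * M1 k - w k * P k + w k * Q k.
  have M1_antisym : moment 1 (B k j) zerov z = - M1 k.
    by apply: moment_opp => [|u]; [vec_continuous_B | exact: B_antisym].
  have M2_closed l : moment 2 (partial (B k l) j) zerov z =
      moment 2 (partial (B j l) k) zerov z - moment 2 (partial (B j k) l) zerov z.
    by apply: moment_minus => [||u]; [vec_continuous_B | vec_continuous_B |
                                      exact: partial_B_closed].
  rewrite A0_deriv_ev M1_antisym (sumI_ext (g := fun l =>
    z l * moment 2 (partial (B j l) k) zerov z - z l * moment 2 (partial (B j k) l) zerov z)).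
    by rewrite sumI_minus /P /Q; ring.
  by move=> l; rewrite M2_closed; ring.
have euler k : w k * B j k z = 2 * (w k * M1 k) + w k * Q k.
  have := moment_euler 1 zerov z (B_smooth j k).
  rewrite (_ : (fun i => zerov i + z i) = z) => [<-|]; first by rewrite /M1 /Q /=; ring.
  by apply: functional_extensionality => i; rewrite /zerov Rplus_0_l.
have swap : sumI (fun k => z k * sumI (fun m => w m * moment 2 (partial (B j k) m) zerov z))
            = sumI (fun k => w k * P k).
  rewrite (sumI_ext (g := fun k =>
    sumI (fun m => z k * (w m * moment 2 (partial (B j k) m) zerov z))))
    => [|k]; last by rewrite sumI_scal.
  rewrite sumI_swap; apply: sumI_ext => m; rewrite /P -sumI_scal.
  by apply: sumI_ext => k; ring.
rewrite (sumI_ext lhs) (sumI_ext euler) /A0_deriv /radial_deriv [X in - X]sumI_plus swap.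
by rewrite sumI_plus sumI_minus sumI_plus sumI_scal /M1; ring.
Qed.

Lemma A0_ftc j x y :
  RInt (fun s => A0_deriv j (segment x y s) (fun i => y i - x i)) 0 1 = A0 B j y - A0 B j x.
Proof.
have seg_line : is_line (segment x y) x (fun i => y i - x i) by move=> s i; rewrite /segment; ring.
have cont s : continuous (fun s => A0_deriv j (segment x y s) (fun i => y i - x i)) s.
  apply: (@continuity_2d_pt_continuous
           (fun _ s => A0_deriv j (segment x y s) (fun i => y i - x i)) 0).
  by apply: continuity_2d_pt_A0_deriv => i; rewrite /segment; continuity_gauge.
have := is_RInt_derive _ _ 0 1 (fun s _ => A0_line j s seg_line) (fun s _ => cont s).
move/is_RInt_unique => ->.
have -> : segment x y 1 = y by apply: functional_extensionality => i; rewrite /segment; ring.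
have -> : segment x y 0 = x by apply: functional_extensionality => i; rewrite /segment; ring.
by [].
Qed.

Lemma continuity_2d_pt_segment x y i a b : continuity_2d_pt (fun _ s => segment x y s i) a b.
Proof. by rewrite /segment; continuity_gauge. Qed.

Lemma ex_RInt_weighted_A0_deriv k x y v (w : R -> R) :
  (forall s, continuity_2d_pt (fun _ s => w s) 0 s) ->
  ex_RInt (fun s => w s * A0_deriv k (segment x y s) v) 0 1.
Proof.
move=> cw; apply: ex_RInt_of_continuity_2d => s; apply: continuity_2d_pt_mult => //.
apply: continuity_2d_pt_A0_deriv => i.
  exact: continuity_2d_pt_segment.
exact: continuity_2d_pt_const.
Qed.

Definition phiA_deriv y x vy vx : R :=
  sumI (fun k => (vy k - vx k) * RInt (fun s => A0 B k (segment x y s)) 0 1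
                 + (y k - x k) * RInt (fun s => A0_deriv k (segment x y s) (segment vx vy s)) 0 1).

Lemma phiA_line y x vy vx :
  is_derive (fun t => phiA B (fun i => y i + t * vy i) (fun i => x i + t * vx i)) 0
    (phiA_deriv y x vy vx).
Proof.
apply: is_derive_sumI => k.
pose seg t := segment (fun i => x i + t * vx i) (fun i => y i + t * vy i).
have seg0 s : seg 0 s = segment x y s.
  by apply: functional_extensionality => i; rewrite /seg /segment; ring.
have seg_line s : is_line (seg^~ s) (segment x y s) (segment vx vy s).
  by move=> t i; rewrite /seg /segment; ring.
have dI : is_derive (fun t => RInt (fun s => A0 B k (seg t s)) 0 1) 0
            (RInt (fun s => A0_deriv k (seg 0 s) (segment vx vy s)) 0 1).
  apply: (is_derive_RInt_param01 (F := fun t s => A0 B k (seg t s))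
                                 (F' := fun t s => A0_deriv k (seg t s) (segment vx vy s))) => t s.
  - exact: A0_line (seg_line s).
  - by rewrite /seg /segment; continuity_gauge.
  - by apply: continuity_2d_pt_A0_deriv => i; rewrite /seg /segment; continuity_gauge.
have dcoef : is_derive (fun t => y k + t * vy k - (x k + t * vx k)) 0 (vy k - vx k).
  by auto_derive => //; ring.
apply: is_derive_eq (is_derive_Rmult dcoef dI) _.
rewrite (eq_RInt (f := fun s => A0 B k (seg 0 s)) (g := fun s => A0 B k (segment x y s)))
  => [|s]; last by rewrite seg0.
rewrite (eq_RInt (f := fun s => A0_deriv k (seg 0 s) (segment vx vy s))
                 (g := fun s => A0_deriv k (segment x y s) (segment vx vy s))) => [|s].
  by ring.
by rewrite seg0.
Qed.

(* The two directions (e_j, 0) and (0, e_j) weight the same integrand by s and 1 - s. *)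
Lemma phiA_deriv_diag j y x :
  phiA_deriv y x (ev j) zerov + phiA_deriv y x zerov (ev j)
  = sumI (fun k => (y k - x k) * RInt (fun s => A0_deriv k (segment x y s) (ev j)) 0 1).
Proof.
rewrite /phiA_deriv -sumI_plus; apply: sumI_ext => k.
set D := fun s => A0_deriv k (segment x y s) (ev j).
rewrite (eq_RInt (f := fun s => A0_deriv k (segment x y s) (segment zerov (ev j) s))
                 (g := fun s => s * D s)) => [|s]; last first.
  by apply: A0_deriv_scal => i; rewrite /segment /zerov; ring.
rewrite (eq_RInt (f := fun s => A0_deriv k (segment x y s) (segment (ev j) zerov s))
                 (g := fun s => (1 - s) * D s)) => [|s]; last first.
  by apply: A0_deriv_scal => i; rewrite /segment /zerov; ring.
have ex_s : ex_RInt (fun s => s * D s) 0 1.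
  by apply: ex_RInt_weighted_A0_deriv => s; apply: continuity_2d_pt_id2.
have ex_1s : ex_RInt (fun s => (1 - s) * D s) 0 1.
  apply: ex_RInt_weighted_A0_deriv => s.
  by apply: continuity_2d_pt_minus; [apply: continuity_2d_pt_const | apply: continuity_2d_pt_id2].
rewrite (eq_RInt (f := D) (g := fun s => s * D s + (1 - s) * D s)) => [|s]; last ring.
by rewrite (RInt_plus (V := R_CompleteNormedModule)) //= /plus /=; ring.
Qed.

Lemma phiA_deriv_partials j y x :
  phiA_deriv y x (ev j) zerov + phiA_deriv y x zerov (ev j) =
  A0 B j y - A0 B j x + (Agauge B j x y - Agauge B j y x).
Proof.
have ex_D k : ex_RInt (fun s => (y k - x k) * A0_deriv k (segment x y s) (ev j)) 0 1.
  by apply: ex_RInt_weighted_A0_deriv => s; apply: continuity_2d_pt_const.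
have ex_B k : ex_RInt (fun s => (y k - x k) * B j k (segment x y s)) 0 1.
  by apply: ex_RInt_of_continuity_2d => s; rewrite /segment; continuity_gauge.
have ex_dA : ex_RInt (fun s => A0_deriv j (segment x y s) (fun i => y i - x i)) 0 1.
  apply: ex_RInt_of_continuity_2d => s; apply: continuity_2d_pt_A0_deriv => i.
    exact: continuity_2d_pt_segment.
  exact: continuity_2d_pt_const.
rewrite phiA_deriv_diag (sumI_ext (g := fun k =>
  RInt (fun s => (y k - x k) * A0_deriv k (segment x y s) (ev j)) 0 1)) => [|k]; last first.
  rewrite RInt_mult_l //; apply: ex_RInt_of_continuity_2d => s.
  apply: continuity_2d_pt_A0_deriv => i.
    exact: continuity_2d_pt_segment.
  exact: continuity_2d_pt_const.
rewrite -(RInt_sumI ex_D).2 (eq_RInt (g := fun s => A0_deriv j (segment x y s) (fun i => y i - x i)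
                      + sumI (fun k => (y k - x k) * B j k (segment x y s)))) => [|s]; last first.
  exact: A0_deriv_curl.
rewrite (RInt_plus (V := R_CompleteNormedModule)) //; last exact: (RInt_sumI ex_B).1.
rewrite /plus /= A0_ftc Agauge_antisym_diff /radial (RInt_sumI ex_B).2; congr (_ + _).
apply: sumI_ext => k; rewrite RInt_mult_l; last first.
  by apply: ex_RInt_of_continuity_2d => s; rewrite /segment; continuity_gauge.
congr (_ * _); apply: eq_RInt => s; rewrite Rmult_1_l; congr (B j k).
by apply: functional_extensionality => i; rewrite /segment; ring.
Qed.

End Gauge.

Definition is_derive_C (F : R -> C) (t : R) (D : C) : Prop :=
  is_derive (fun s => Re (F s)) t (Re D) /\ is_derive (fun s => Im (F s)) t (Im D).

Lemma cexpi_add a b : Cmult (cexpi a) (cexpi b) = cexpi (a + b).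
Proof. by rewrite /cexpi cos_plus sin_plus; apply: injective_projections => /=; ring. Qed.

Lemma is_derive_C_polar (a th : R -> R) t a' th' : is_derive a t a' -> is_derive th t th' ->
  is_derive_C (fun s => Cmult (RtoC (a s)) (cexpi (th s))) t
    (Cmult (a', a t * th') (cexpi (th t))).
Proof.
move=> da dth; have Ea := is_derive_unique _ _ _ da; have Eth := is_derive_unique _ _ _ dth.
by rewrite /is_derive_C /cexpi /=; split;
  (auto_derive; [repeat split; eexists; eassumption | rewrite Ea Eth; ring]).
Qed.

Lemma Csum_ext {d : nat} (f g : 'I_d -> C) : (forall k, f k = g k) -> Csum f = Csum g.
Proof. by move=> fg; rewrite /Csum; elim: (enum 'I_d) => //= k r ->; rewrite fg. Qed.

Lemma Csum_scal {d : nat} (c : 'I_d -> R) (Z : C) :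
  Csum (fun k => Cmult (RtoC (c k)) Z) = Cmult (RtoC (sumI c)) Z.
Proof.
rewrite /Csum /sumI; elim: (enum 'I_d) => [|k r /= ->] /=.
  by apply: injective_projections => /=; ring.
by apply: injective_projections => /=; ring.
Qed.

Section Partials.
Context {d : nat}.

Lemma Cpartial_polar (F : vec d -> C) (a th : vec d -> R) j p a' th' :
  (forall q, F q = Cmult (RtoC (a q)) (cexpi (th q))) ->
  is_derive (fun t => a (upd p j t)) 0 a' -> is_derive (fun t => th (upd p j t)) 0 th' ->
  has_Cpartial F j p /\ Cpartial F j p = Cmult (a', a p * th') (cexpi (th p)).
Proof.
move=> FE da dth; have [dRe dIm] := is_derive_C_polar da dth; rewrite upd0 in dRe dIm.
have dRe' : is_derive (fun t => Re (F (upd p j t))) 0 (Re (Cmult (a', a p * th') (cexpi (th p)))).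
  by apply: is_derive_ext dRe => t; rewrite FE.
have dIm' : is_derive (fun t => Im (F (upd p j t))) 0 (Im (Cmult (a', a p * th') (cexpi (th p)))).
  by apply: is_derive_ext dIm => t; rewrite FE.
split; first by split; eexists; [exact: dRe' | exact: dIm'].
rewrite /Cpartial /partial (is_derive_unique _ _ _ dRe') (is_derive_unique _ _ _ dIm').
by case: (Cmult _ _).
Qed.

Lemma dotv_upd_l (u w : vec d) k t : dotv (upd u k t) w = dotv u w + t * w k.
Proof.
rewrite /dotv -(sumI_delta w k) -sumI_scal -sumI_plus; apply: sumI_ext => i.
by rewrite is_line_upd /ev; ring.
Qed.

Lemma dotv_upd_r (u w : vec d) k t : dotv u (upd w k t) = dotv u w + t * u k.
Proof.
rewrite /dotv -(sumI_delta u k) -sumI_scal -sumI_plus; apply: sumI_ext => i.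
by rewrite is_line_upd /ev; ring.
Qed.

Lemma upd_sub_l (y x : vec d) j t : (fun i => upd y j t i - x i) = upd (fun i => y i - x i) j t.
Proof. by apply: functional_extensionality => i; rewrite !is_line_upd; ring. Qed.

Lemma upd_sub_r (y x : vec d) j t : (fun i => y i - upd x j t i) = upd (fun i => y i - x i) j (- t).
Proof. by apply: functional_extensionality => i; rewrite !is_line_upd; ring. Qed.

Lemma ex_derive_gauss_line (p v : vec d) t0 :
  ex_derive (fun t => gauss (fun i => p i + t * v i)) t0.
Proof.
pose D t := dotv (fun i => p i + t * v i) (fun i => p i + t * v i).
have dD : ex_derive D t0.
  by eexists; apply: is_derive_sumI => i; auto_derive.
rewrite /gauss -/(D _).
apply: (ex_derive_mult (fun _ => _) (fun t => exp (- D t / 2))); first exact: ex_derive_const.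
apply: (ex_derive_comp exp (fun t => - D t / 2)); first by eexists; apply: is_derive_exp.
by auto_derive.
Qed.

End Partials.

Section CoherentState.
Context {d : nat} (B : 'I_d -> 'I_d -> vec d -> R) (hB : magnetic_field B) (lam : R).
Implicit Types (x y z xi : vec d).

Definition amp x y : R := Rpower lam (INR d / 2) * gauss (fun i => lam * (y i - x i)).

Definition phase x xi y : R := dotv xi (fun i => y i - x i) + phiA B y x.

Lemma gA_polar x xi y : gA B lam x xi y = Cmult (RtoC (amp x y)) (cexpi (phase x xi y)).
Proof. by rewrite /gA cexpi_add. Qed.

Lemma amp_partials x y j : exists a',
  is_derive (fun t => amp x (upd y j t)) 0 a' /\ is_derive (fun t => amp (upd x j t) y) 0 (- a').
Proof.
pose f t := amp x (upd y j t).
have df : ex_derive f 0.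
  apply: (ex_derive_ext (fun t =>
    Rpower lam (INR d / 2) * gauss (fun i => lam * (y i - x i) + t * (lam * ev j i)))) => [t|].
    by rewrite /f /amp; congr (_ * gauss _); apply: functional_extensionality => i;
      rewrite is_line_upd; ring.
  by apply: ex_derive_scal; apply: ex_derive_gauss_line.
exists (Derive f 0); split; first exact: Derive_correct.
have df' : is_derive f (- 0) (Derive f 0) by rewrite Ropp_0; apply: Derive_correct.
apply: (is_derive_ext (fun t => f (- t))) => [t|].
  rewrite /f /amp; congr (_ * gauss _); apply: functional_extensionality => i.
  by rewrite !is_line_upd; ring.
apply: is_derive_eq (is_derive_comp _ _ _ _ _ df' (is_derive_opp _ _ _ (is_derive_id 0))) _.
by rewrite /scal /= /mult /= /opp /one /=; ring.
Qed.

Lemma phase_partial_y x xi y j :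
  is_derive (fun t => phase x xi (upd y j t)) 0 (xi j + phiA_deriv B y x (ev j) zerov).
Proof.
apply: (is_derive_ext (fun t => dotv xi (fun i => y i - x i) + t * xi j
          + phiA B (fun i => y i + t * ev j i) (fun i => x i + t * zerov i))) => [t|].
  rewrite /phase upd_sub_l dotv_upd_r; congr (_ + phiA B _ _);
    by apply: functional_extensionality => i; rewrite ?is_line_upd /zerov; ring.
apply: is_derive_plus (phiA_line hB y x (ev j) zerov).
by auto_derive => //; ring.
Qed.

Lemma phase_partial_x x xi y j :
  is_derive (fun t => phase (upd x j t) xi y) 0 (- xi j + phiA_deriv B y x zerov (ev j)).
Proof.
apply: (is_derive_ext (fun t => dotv xi (fun i => y i - x i) + (- t) * xi j
          + phiA B (fun i => y i + t * zerov i) (fun i => x i + t * ev j i))) => [t|].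
  rewrite /phase upd_sub_r dotv_upd_r; congr (_ + phiA B _ _);
    by apply: functional_extensionality => i; rewrite ?is_line_upd /zerov; ring.
apply: is_derive_plus (phiA_line hB y x zerov (ev j)).
by auto_derive => //; ring.
Qed.

Lemma phase_partial_xi x xi y k :
  is_derive (fun t => phase x (upd xi k t) y) 0 (y k - x k).
Proof.
apply: (is_derive_ext (fun t => dotv xi (fun i => y i - x i) + t * (y k - x k) + phiA B y x)).
  by move=> t; rewrite /phase dotv_upd_l.
by auto_derive => //; ring.
Qed.

Lemma taylor_rem1_Agauge_l j x y :
  taylor_rem1 (fun z => Agauge B j z x) x y
  = Agauge B j y x + sumI (fun k => B j k x * (y k - x k)) / 2.
Proof.
rewrite /taylor_rem1 Agauge_diag // (sumI_ext (g := fun i => - / 2 * (B j i x * (y i - x i)))).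
  by rewrite sumI_scal; field.
by move=> i; rewrite partial_Agauge_l //; field.
Qed.

Lemma taylor_rem1_Agauge_r j x y :
  taylor_rem1 (fun z => Agauge B j x z) x y
  = Agauge B j x y - sumI (fun k => B j k x * (y k - x k)) / 2.
Proof.
rewrite /taylor_rem1 Agauge_diag // (sumI_ext (g := fun i => / 2 * (B j i x * (y i - x i)))).
  by rewrite sumI_scal; field.
by move=> i; rewrite partial_Agauge_r //; field.
Qed.

End CoherentState.

Lemma polar_identity (a a' Ty Tx S Q : R) (e : C) : Ty + Tx = S + Q ->
  Cmult (Copp Ci) (Cmult (a', a * Ty) e) =
  Cplus (Cminus (Cmult Ci (Cmult (- a', a * Tx) e)) (Cmult (RtoC S) (Cmult Ci (Cmult (0, a) e))))
        (Cmult (RtoC Q) (Cmult (RtoC a) e)).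
Proof.
move=> T; have -> : Ty = S + Q - Tx by lra.
by case: e => e1 e2; apply: injective_projections => /=; ring.
Qed.

Unset Implicit Arguments.

Theorem lemma6p1 (d : nat) (hd : (2 <= d)%N) (lam : R) (hlam : 1 <= lam)
  (B : 'I_d -> 'I_d -> vec d -> R) (hB : magnetic_field B)
  (y x xi : vec d) (j : 'I_d) :
  has_Cpartial (fun y' => gA B lam x xi y') j y /\
  has_Cpartial (fun x' => gA B lam x' xi y) j x /\
  (forall k : 'I_d, has_Cpartial (fun xi' => gA B lam x xi' y) k xi) /\
  Cmult (Copp Ci) (Cpartial (fun y' => gA B lam x xi y') j y) =
  Cplus (Cminus
    (Cmult Ci (Cpartial (fun x' => gA B lam x' xi y) j x))
    (Csum (fun k => Cmult (RtoC (B j k x))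
                          (Cmult Ci (Cpartial (fun xi' => gA B lam x xi' y) k xi)))))
    (Cmult (RtoC (A0 B j y - A0 B j x
                  - taylor_rem1 (fun z => Agauge B j z x) x y
                  + taylor_rem1 (fun z => Agauge B j x z) x y))
           (gA B lam x xi y)).
Proof.
have [a' [da_y da_x]] := amp_partials lam x y j.
have [ex_y Dy] := Cpartial_polar (gA_polar B lam x xi) da_y (phase_partial_y hB x xi y j).
have [ex_x Dx] :=
  Cpartial_polar (fun x' => gA_polar B lam x' xi y) da_x (phase_partial_x hB x xi y j).
have D_xi k := Cpartial_polar (fun xi' => gA_polar B lam x xi' y)
                 (is_derive_const (amp lam x y) 0) (phase_partial_xi B x xi y k).
have sum_xi : Csum (fun k => Cmult (RtoC (B j k x))
                                   (Cmult Ci (Cpartial (fun xi' => gA B lam x xi' y) k xi)))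
    = Cmult (RtoC (sumI (fun k => B j k x * (y k - x k))))
            (Cmult Ci (Cmult (0, amp lam x y) (cexpi (phase B x xi y)))).
  rewrite -Csum_scal; apply: Csum_ext => k; rewrite (D_xi k).2.
  by case: (cexpi _) => e1 e2; apply: injective_projections => /=; rewrite /zero /=; ring.
split; first exact: ex_y.
split; first exact: ex_x.
split; first by move=> k; case: (D_xi k).
rewrite [in LHS]Dy [X in Cminus (Cmult Ci X) _]Dx sum_xi gA_polar; apply: polar_identity.
rewrite taylor_rem1_Agauge_l // taylor_rem1_Agauge_r //.
by have := phiA_deriv_partials hB j y x; lra.
Qed.
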